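(* Let $A\in\mathbb{R}^{m\times n}$, $b\in\mathbb{R}^m$, and let $Q_k=(q_1,\dots,q_k)$, $k=1,2,\dots$, be the matrices with orthonormal columns generated by the Golub–Kahan bidiagonalization of $A$ started with $b$ (described in the context). For each $k$ let $Q_k^{\perp}\in\mathbb{R}^{n\times(n-k)}$ be a matrix with orthonormal columns such that $(Q_k\ \ Q_k^{\perp})$ is an orthogonal matrix. Let $L\in\mathbb{R}^{p\times n}$. When $p\ge n-k$, we have $$\kappa(LQ_k^{\perp})\ \ge\ \kappa(LQ_{k+1}^{\perp}),\qquad k=2,3,\dots,n-1,$$ where for a matrix $M$ with $r$ columns, $\kappa(M)=\sigma_{\max}(M)/\sigma_{\min}(M)$, $\sigma_{\min}(M)$ being the $r$-th (smallest) singular value of $M$.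
   Context: Golub–Kahan bidiagonalization: set $\beta_1=\|b\|$, $p_1=b/\beta_1$, $\beta_1q_0=0$, and for $i=1,2,\dots$ compute $\alpha_iq_i=A^Tp_i-\beta_iq_{i-1}$ and $\beta_{i+1}p_{i+1}=Aq_i-\alpha_ip_i$, with $\alpha_i,\beta_{i+1}\ge0$ chosen so that $\|q_i\|=\|p_{i+1}\|=1$ (no breakdown assumed). The vectors $q_1,q_2,\dots$ are orthonormal and $Q_k=(q_1,\dots,q_k)$. *)

From HB Require Import structures.
From mathcomp Require Import all_boot all_order all_algebra.
From mathcomp Require Import reals constructive_ereal.
Set Implicit Arguments. Unset Strict Implicit. Unset Printing Implicit Defensive.
Import Order.TTheory GRing.Theory Num.Theory.
Local Open Scope ring_scope.

Definition vnorm {R : realType} {m : nat} (v : 'cV[R]_m) : R :=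
  Num.sqrt ((v^T *m v) 0 0).

(* Golub--Kahan bidiagonalization.
   gk_state A b i = (p_{i+1}, q_i, alpha_i, beta_{i+1});
   for i = 0 : (p_1, q_0 = 0, alpha_0 := 0 (dummy), beta_1 = ||b||). *)
Fixpoint gk_state {R : realType} {m n : nat} (A : 'M[R]_(m, n)) (b : 'cV[R]_m)
  (i : nat) : 'cV[R]_m * 'cV[R]_n * R * R :=
  match i with
  | 0 => let beta := vnorm b in (beta^-1 *: b, 0, 0, beta)
  | i'.+1 =>
      let '(p, q, _, beta) := gk_state A b i' in
      let w := A^T *m p - beta *: q in
      let alpha := vnorm w in
      let q' := alpha^-1 *: w in
      let z := A *m q' - alpha *: p in
      let beta' := vnorm z in
      (beta'^-1 *: z, q', alpha, beta')
  end.

Definition gk_p {R : realType} {m n} (A : 'M[R]_(m, n)) b i := (gk_state A b i).1.1.1.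
Definition gk_q {R : realType} {m n} (A : 'M[R]_(m, n)) b i := (gk_state A b i).1.1.2.
Definition gk_alpha {R : realType} {m n} (A : 'M[R]_(m, n)) b i := (gk_state A b i).1.2.
Definition gk_beta {R : realType} {m n} (A : 'M[R]_(m, n)) b i := (gk_state A b i).2.

Definition gk_no_breakdown {R : realType} {m n} (A : 'M[R]_(m, n)) b (N : nat) : Prop :=
  (forall i, (i < N)%N -> gk_beta A b i != 0) /\
  (forall i, (1 <= i <= N)%N -> gk_alpha A b i != 0).

Definition GKQ {R : realType} {m n} (A : 'M[R]_(m, n)) b (k : nat) : 'M[R]_(n, k) :=
  \matrix_(i < n, j < k) (gk_q A b j.+1) i 0.

(* s is the list of singular values of M (with multiplicity), in nonincreasing
   order: the nonnegative square roots of the eigenvalues of M^T M. *)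
Definition singular_values {R : realType} {p r : nat} (M : 'M[R]_(p, r)) (s : seq R) : Prop :=
  size s = r /\ sorted (fun x y => y <= x) s /\ all (fun x => 0 <= x) s /\
  char_poly (M^T *m M) = \prod_(x <- s) ('X - (x ^+ 2)%:P).

(* Condition number sigma_max / sigma_min from the sorted list of singular
   values; +oo when sigma_min = 0.  Convention for a matrix with no columns
   (empty list): 1. *)
Definition kappa_sv {R : realType} (s : seq R) : \bar R :=
  match s with
  | [::] => 1%:E
  | x :: _ => let l := last x s in if l == 0 then +oo%E else (x / l)%:E
  end.

From HB Require Import structures.
From mathcomp Require Import all_boot all_order all_algebra.
From mathcomp Require Import reals constructive_ereal complex zify.
Import Order.TTheory GRing.Theory Num.Theory.
Local Open Scope ring_scope.

Set Implicit Arguments. Unset Strict Implicit. Unset Printing Implicit Defensive.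

(* Q_k is Q_{k+1} without its last column, so the range of Q_{k+1}^perp is
   contained in that of Q_k^perp and L Q_{k+1}^perp = (L Q_k^perp) W, where
   W = (Q_k^perp)^T Q_{k+1}^perp has orthonormal columns.  The squared singular
   values of L Q_{k+1}^perp are the eigenvalues of the compression W^T G W of
   G = (L Q_k^perp)^T (L Q_k^perp); by the Rayleigh quotient bounds (obtained
   from the complex spectral theorem) they lie between the extreme eigenvalues
   of G, so the condition number cannot increase. *)

Section NormalQuadraticForm.
Local Open Scope sesquilinear_scope.
Variable C : numClosedFieldType.

Lemma spectral_diag_eigenvalue n (G : 'M[C]_n) j :
  G \is normalmx -> eigenvalue G (spectral_diag G 0 j).
Proof.
move=> /orthomx_spectralP; set P := spectralmx G; set d := spectral_diag G => GE.
have PU : P \is unitarymx := spectral_unitarymx G.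
apply/eigenvalueP; exists (row j P).
  rewrite GE invmx_unitary // !mulmxA -row_mul (unitarymxP PU) row1 -rowE.
  by rewrite row_diag_mx -scalemxAl -rowE.
apply/eqP => Pj0; have := congr1 (mulmx^~ (P^t*)) Pj0.
rewrite -row_mul (unitarymxP PU) row1 mul0mx => /matrixP/(_ 0 j).
by rewrite !mxE !eqxx => /eqP; rewrite oner_eq0.
Qed.

Lemma normalmx_quad_bounds n (G : 'M[C]_n) (lo hi : C) (u : 'rV[C]_n) :
  G \is normalmx -> (forall a, eigenvalue G a -> lo <= a <= hi) ->
  lo * (u *m u^t*) 0 0 <= (u *m G *m u^t*) 0 0 <= hi * (u *m u^t*) 0 0.
Proof.
move=> Gnormal Gbounds; move: (Gnormal) => /orthomx_spectralP.
set P := spectralmx G; set d := spectral_diag G => GE.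
have PU : P \is unitarymx := spectral_unitarymx G.
set y := u *m P^t*.
have yE : y^t* = P *m u^t* by rewrite trmx_mul map_mxM trmxCK.
have normE : (u *m u^t*) 0 0 = \sum_j `|y 0 j| ^+ 2.
  rewrite -[u in u *m _](mulmxKtV u PU) // -/y -mulmxA -yE mxE.
  by apply: eq_bigr => j _; rewrite !mxE normCK.
have quadE : (u *m G *m u^t*) 0 0 = \sum_j d 0 j * `|y 0 j| ^+ 2.
  rewrite GE invmx_unitary // !mulmxA -/y -mulmxA -yE mxE.
  by apply: eq_bigr => j _; rewrite mul_mx_diag !mxE normCK mulrAC mulrC.
rewrite normE quadE !mulr_sumr; apply/andP; split; apply: ler_sum => j _;
  have /andP[loj hij] := Gbounds _ (spectral_diag_eigenvalue j Gnormal);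
  by apply: ler_wpM2r; rewrite ?exprn_ge0.
Qed.

End NormalQuadraticForm.

Section RealSymmetric.
Local Open Scope sesquilinear_scope.
Variable R : rcfType.
Local Notation toC := (real_complex R).

Lemma tr_map_real_complex m n (M : 'M[R]_(m, n)) :
  (map_mx toC M)^t* = map_mx toC M^T.
Proof.
by apply/matrixP => i j; rewrite !mxE; apply: conj_Creal; rewrite complex_real.
Qed.

Lemma symmetric_quad_bounds r (G : 'M[R]_r) (t : seq R) (lo hi : R)
    (u : 'rV[R]_r) :
  G^T = G -> char_poly G = \prod_(x <- t) ('X - x%:P) ->
  {subset t <= [pred x | lo <= x <= hi]} ->
  lo * (u *m u^T) 0 0 <= (u *m G *m u^T) 0 0 <= hi * (u *m u^T) 0 0.
Proof.
move=> Gsym charG t_bounds.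
have Gnormal : map_mx toC G \is normalmx.
  by apply/normalmxP; rewrite tr_map_real_complex Gsym.
have eig_bounds a : eigenvalue (map_mx toC G) a -> toC lo <= a <= toC hi.
  rewrite eigenvalue_root_char -map_char_poly charG -(prod_map_poly _ _ xpredT).
  by rewrite root_prod_XsubC => /mapP[x /t_bounds xb ->]; rewrite !lecR.
have := normalmx_quad_bounds (map_mx toC u) Gnormal eig_bounds.
by rewrite tr_map_real_complex -!map_mxM !mxE -!rmorphM !lecR.
Qed.

End RealSymmetric.

Lemma mulmx_tr_gt0 (R : realDomainType) r (v : 'rV[R]_r) :
  v != 0 -> 0 < (v *m v^T) 0 0.
Proof.
move=> v_neq0; rewrite mxE lt_def; apply/andP; split; last first.
  by apply: sumr_ge0 => j _; rewrite mxE -expr2 sqr_ge0.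
apply: contraNneq v_neq0 => /eqP; rewrite psumr_eq0 => [/allP v0|j _]; last first.
  by rewrite mxE -expr2 sqr_ge0.
apply/eqP/rowP => j; rewrite !mxE; apply/eqP.
by have := v0 j (mem_index_enum j); rewrite mxE -expr2 sqrf_eq0.
Qed.

Lemma eigenvalue_compression_bounds (R : rcfType) r q
    (G : 'M[R]_r) (W : 'M[R]_(r, q)) (t : seq R) (lo hi a : R) :
  G^T = G -> char_poly G = \prod_(x <- t) ('X - x%:P) ->
  {subset t <= [pred x | lo <= x <= hi]} -> W^T *m W = 1%:M ->
  eigenvalue (W^T *m G *m W) a -> lo <= a <= hi.
Proof.
move=> Gsym charG t_bounds W_orth /eigenvalueP[v v_eig v_neq0].
set u := v *m W^T.
have uu : u *m u^T = v *m v^T.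
  by rewrite trmx_mul trmxK mulmxA -(mulmxA v) W_orth mulmx1.
have uGu : u *m G *m u^T = a *: (v *m v^T).
  have -> : u *m G *m u^T = v *m (W^T *m G *m W) *m v^T.
    by rewrite trmx_mul trmxK !mulmxA.
  by rewrite v_eig -scalemxAl.
have := symmetric_quad_bounds u Gsym charG t_bounds.
by rewrite uu uGu [(a *: _ : matrix _ _ _) 0 0]mxE !ler_pM2r ?mulmx_tr_gt0.
Qed.

Lemma nonincreasing_path_bounds (R : numDomainType) (a : R) s :
  path >=%R a s -> {subset a :: s <= [pred x | last a s <= x <= a]}.
Proof.
elim: s a => [|b s IH] a /=.
  by move=> _ x; rewrite mem_seq1 => /eqP ->; rewrite inE /= lexx.
move=> /andP[ba bs] x; rewrite inE => /predU1P[->|xs]; rewrite inE /=.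
  by have /andP[lb _] := IH b bs b (mem_head _ _); rewrite lexx (le_trans lb ba).
by have /andP[lx xb] := IH b bs x xs; rewrite lx (le_trans xb ba).
Qed.

Section SingularValues.
Variable R : realType.

Lemma singular_values_char_poly p r (M : 'M[R]_(p, r)) s :
  singular_values M s ->
  char_poly (M^T *m M) = \prod_(z <- map (fun z => z ^+ 2) s) ('X - z%:P).
Proof. by case=> [_ [_ [_ ->]]]; rewrite big_map. Qed.

Lemma singular_values_mulmx_orthonormal p r q
    (M : 'M[R]_(p, r)) (W : 'M[R]_(r, q)) (x : R) (s t : seq R) :
  W^T *m W = 1%:M -> singular_values M (x :: s) -> singular_values (M *m W) t ->
  {subset t <= [pred y | last x s <= y <= x]}.
Proof.
move=> W_orth svM svMW y yt.
have [_ [s_sorted [s_ge0 _]]] := svM; have [_ [_ [t_ge0 _]]] := svMW.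
have ge0 z : z \in x :: s -> 0 <= z by move/allP: s_ge0; apply.
have y_ge0 : 0 <= y by move/allP: t_ge0; apply.
have x_ge0 := ge0 x (mem_head x s); have l_ge0 := ge0 _ (mem_last x s).
have sq_bounds : {subset map (fun z => z ^+ 2) (x :: s) <=
                  [pred z | last x s ^+ 2 <= z <= x ^+ 2]}.
  move=> _ /mapP[z zs ->]; have z_ge0 := ge0 z zs.
  have /andP[lz zx] := nonincreasing_path_bounds s_sorted zs.
  by rewrite inE /= !ler_sqr ?nnegrE ?lz.
have eig : eigenvalue (W^T *m (M^T *m M) *m W) (y ^+ 2).
  rewrite eigenvalue_root_char !mulmxA -trmx_mul -mulmxA.
  by rewrite (singular_values_char_poly svMW) root_prod_XsubC; exact: map_f.
have MM_sym : (M^T *m M)^T = M^T *m M by rewrite trmx_mul trmxK.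
have := eigenvalue_compression_bounds MM_sym (singular_values_char_poly svM)
  sq_bounds W_orth eig.
by rewrite inE /= !ler_sqr ?nnegrE.
Qed.

Lemma kappa_sv_le (x : R) (s t : seq R) :
  path >=%R x s -> 0 <= last x s ->
  {subset t <= [pred y | last x s <= y <= x]} -> (kappa_sv t <= kappa_sv (x :: s))%E.
Proof.
move=> s_sorted l_ge0 t_bounds.
have /andP[_ lx] := nonincreasing_path_bounds s_sorted (mem_last x s).
rewrite [X in (_ <= X)%E]/kappa_sv /=; case: ifPn => [_|l_neq0]; first exact: leey.
have l_gt0 : 0 < last x s by rewrite lt_def l_neq0.
case: t t_bounds => [|y t] t_bounds; first by rewrite lee_fin ler_pdivlMr // mul1r.
have /andP[ly yx] := t_bounds y (mem_head y t).
have /andP[ll _] := t_bounds _ (mem_last y t).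
have ll_gt0 := lt_le_trans l_gt0 ll.
rewrite /= (negbTE (lt0r_neq0 ll_gt0)) lee_fin ler_pdivrMr // mulrAC ler_pdivlMr //.
by rewrite ler_pM // (le_trans l_ge0 ly).
Qed.

End SingularValues.

Lemma orthonormal_row_mx (R : pzRingType) n k l
    (Q : 'M[R]_(n, k)) (Qp : 'M[R]_(n, l)) :
  (row_mx Q Qp)^T *m row_mx Q Qp = 1%:M -> Qp^T *m Q = 0 /\ Qp^T *m Qp = 1%:M.
Proof. by rewrite tr_row_mx mul_col_row scalar_mx_block => /eq_block_mx[]. Qed.

Lemma orthogonal_complement_proj (R : comUnitRingType) n k c (Q : 'M[R]_(n, k))
    (Qp : 'M[R]_(n, n - k)) (X : 'M[R]_(n, c)) :
  (k <= n)%N -> (row_mx Q Qp)^T *m row_mx Q Qp = 1%:M -> X^T *m Q = 0 ->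
  Qp *m Qp^T *m X = X.
Proof.
move=> kn orth XQ.
have : row_mx Q Qp *m (row_mx Q Qp)^T = 1%:M.
  by move: (row_mx Q Qp) orth; rewrite (subnKC kn) => M; apply: mulmx1C.
rewrite tr_row_mx mul_row_col => /(congr1 (mulmx^~ X)).
have QX : Q^T *m X = 0 by rewrite -[X]trmxK -trmx_mul XQ trmx0.
by rewrite mul1mx mulmxDl -mulmxA QX mulmx0 add0r.
Qed.

Lemma GKQ_colsub (R : realType) m n (A : 'M[R]_(m, n)) b k :
  GKQ A b k = colsub (widen_ord (leqnSn k)) (GKQ A b k.+1).
Proof. by apply/matrixP => i j; rewrite !mxE. Qed.

Unset Implicit Arguments.

Theorem theorem3 (R : realType) (m n p : nat) (A : 'M[R]_(m, n)) (b : 'cV[R]_m)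
  (L : 'M[R]_(p, n)) (k : nat)
  (hk : (2 <= k <= n.-1)%N)
  (hnb : gk_no_breakdown A b k.+1)
  (Qp1 : 'M[R]_(n, n - k)) (Qp2 : 'M[R]_(n, n - k.+1))
  (hQ1 : (row_mx (GKQ A b k) Qp1)^T *m row_mx (GKQ A b k) Qp1 = 1%:M)
  (hQ2 : (row_mx (GKQ A b k.+1) Qp2)^T *m row_mx (GKQ A b k.+1) Qp2 = 1%:M)
  (hp : (n - k <= p)%N)
  (s1 s2 : seq R)
  (hs1 : singular_values (L *m Qp1) s1)
  (hs2 : singular_values (L *m Qp2) s2) :
  (kappa_sv s2 <= kappa_sv s1)%E.
Proof.
have [k_gt1 k_lt_n] := andP hk.
have kn : (k <= n)%N := leq_trans k_lt_n (leq_pred n).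
have [Qp2Q Qp2_orth] := orthonormal_row_mx hQ2.
have Qp2Qk : Qp2^T *m GKQ A b k = 0.
  by rewrite GKQ_colsub mulmx_colsub Qp2Q; apply/matrixP => i j; rewrite !mxE.
have proj := orthogonal_complement_proj kn hQ1 Qp2Qk.
set W := Qp1^T *m Qp2.
have W_orth : W^T *m W = 1%:M.
  by rewrite trmx_mul trmxK -mulmxA (mulmxA Qp1) proj Qp2_orth.
have LQp2 : L *m Qp2 = L *m Qp1 *m W by rewrite -mulmxA (mulmxA Qp1) proj.
case: s1 hs1 => [|x s] hs1.
  by case: hs1 => /= /esym/eqP; rewrite subn_eq0; lia.
rewrite LQp2 in hs2; have [_ [s_sorted [s_ge0 _]]] := hs1.
apply: kappa_sv_le s_sorted _ (singular_values_mulmx_orthonormal W_orth hs1 hs2).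
by move/allP: s_ge0; apply; exact: mem_last.
Qed.
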